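(* Let $K$ be a simplicial complex on the vertex set $[m]$ which has a minimal Taylor resolution. Then there exist a finite set $W$ and a sequence $\mathtt{N}$ of subsets of $W$ such that $K\cong K(\mathtt{N})$.
   Context: For a finite set $W$ and a sequence $\mathtt{N}=\{N_1,\ldots,N_r\}$ of subsets of $W$ (repetitions allowed), choose distinct new points $a_1,\ldots,a_r\notin W$, put $\widetilde{N}_i=N_i\sqcup\{a_i\}$ and $V=W\sqcup\{a_1,\ldots,a_r\}$; $K(\mathtt{N})$ is the simplicial complex on vertex set $V$ whose minimal non-faces are exactly $\widetilde{N}_1,\ldots,\widetilde{N}_r$. A minimal non-face of $K$ is a non-empty $N\subset[m]$ with $N\notin K$ and $N-\{i\}\in K$ for all $i\in N$. With $N_1,\ldots,N_r$ the minimal non-faces of $K$, $K$ has a minimal Taylor resolution iff the Taylor resolution of $\Bbbk[K]$ (free on $w_{i_1,\ldots,i_\ell}$, differential $d(w_{i_1,\ldots,i_\ell})=\sum_k(-1)^{k+1}v_{(N_{i_1}\cup\cdots\cup N_{i_\ell})-(N_{i_1}\cup\cdots\widehat{N_{i_k}}\cdots\cup N_{i_\ell})}w_{i_1,\ldots,\widehat{i_k},\ldots,i_\ell}$) satisfies $d\otimes\Bbbk=0$; equivalently $N_i\not\subset\bigcup_{k\ne i}N_k$ for all $i$. Ghost vertices of $K$ are allowed. *)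

From mathcomp Require Import all_boot.
Set Implicit Arguments. Unset Strict Implicit. Unset Printing Implicit Defensive.

(* A simplicial complex on a finite vertex type V: a family of subsets
   containing the empty set and closed under taking subsets.
   Ghost vertices (v with [set v] \notin K) are allowed. *)
Definition simplicial_complex (V : finType) (K : {set {set V}}) : Prop :=
  set0 \in K /\ forall s t : {set V}, t \subset s -> s \in K -> t \in K.

Definition min_nonface (V : finType) (K : {set {set V}}) (N : {set V}) : bool :=
  [&& N != set0, N \notin K & [forall i in N, (N :\ i) \in K]].

Definition min_nonfaces (V : finType) (K : {set {set V}}) : {set {set V}} :=
  [set N | min_nonface K N].

(* K has a minimal Taylor resolution: d (x) k = 0 for the Taylor resolution.
   Unfolded: every coefficient v_{(N_{i_1} u..u N_{i_l}) - (... hat N_{i_k} ...)}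
   of the differential is a non-constant monomial, i.e. for every family I of
   minimal non-faces and every N in I, N is not contained in the union of the
   other members of I.  (Minimal non-faces are pairwise distinct sets, so
   indexing by sets of minimal non-faces is indexing by subsets of {1..r}.) *)
Definition minimal_Taylor_resolution (V : finType) (K : {set {set V}}) : Prop :=
  forall I : {set {set V}}, I \subset min_nonfaces K ->
    forall N, N \in I -> ~~ (N \subset \bigcup_(M in I :\ N) M).

(* K(N): vertex set V = W + {a_1,...,a_r} (the a_i are inr i), with minimal
   non-faces exactly tN_i = N_i u {a_i}; i.e. the faces are the subsets of V
   containing no tN_i (the tN_i form an antichain since the a_i are distinct). *)
Definition tilde_N (W : finType) (r : nat) (N : 'I_r -> {set W}) (i : 'I_r)
  : {set W + 'I_r} := (inl @: N i) :|: [set inr i].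

Definition K_of (W : finType) (r : nat) (N : 'I_r -> {set W})
  : {set {set W + 'I_r}} :=
  [set s : {set W + 'I_r} | [forall i : 'I_r, ~~ (tilde_N N i \subset s)]].

Definition sc_iso (V1 V2 : finType) (K1 : {set {set V1}}) (K2 : {set {set V2}})
  : Prop :=
  exists f : V1 -> V2, bijective f /\ forall s : {set V1}, (s \in K1) = (f @: s \in K2).

From mathcomp Require Import all_boot.

Set Implicit Arguments.
Unset Strict Implicit.
Unset Printing Implicit Defensive.

(* A simplicial complex is determined by its minimal non-faces M_1, ..., M_r:
   its faces are the sets containing none of them.  The Taylor condition says
   that every M_i has a private vertex a_i, lying in no other M_j.  Take W to be
   the vertices other than the a_i and N_i = M_i - {a_i}; then the bijection
   W + {a_1, ..., a_r} -> [m] that is the identity on W sends each minimal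
   non-face N_i + {a_i} of K(N) onto M_i, hence faces of K(N) onto faces of K. *)

Lemma complex_memE (V : finType) (K : {set {set V}}) :
  simplicial_complex K ->
  forall s, (s \in K) = [forall M in min_nonfaces K, ~~ (M \subset s)].
Proof.
move=> [K0 K_down] s; apply/idP/forall_inP.
  move=> sK M; rewrite inE => /and3P [_ MK _]; apply/negP => Ms.
  by rewrite (K_down _ _ Ms sK) in MK.
move=> noM; apply/negPn/negP => sK.
have [A Amin As] := @minset_exists _ [pred A | A \notin K] s sK.
have [AK A_least] := minsetP Amin.
suff: A \in min_nonfaces K by move/noM; rewrite As.
rewrite inE; apply/and3P; split => //.
  by apply: contraNneq AK => ->.
apply/forall_inP => i iA; apply/negPn/negP => AiK.
have /setP/(_ i) := A_least _ AiK (subD1set A i).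
by rewrite !inE eqxx iA.
Qed.

Lemma minimal_Taylor_private_vertex (V : finType) (K : {set {set V}}) :
  minimal_Taylor_resolution K -> forall M, M \in min_nonfaces K ->
  exists2 x, x \in M & forall M', M' \in min_nonfaces K -> M' != M -> x \notin M'.
Proof.
move=> MT M MK; have /subsetPn [x xM x_notin] := MT _ (subxx _) M MK.
exists x => // M' M'K M'M; apply: contra x_notin => xM'.
by apply/bigcupP; exists M' => //; rewrite in_setD1 M'M.
Qed.

Lemma forall_in_enum_val (T : finType) (A : {pred T}) (P : pred T) :
  [forall x in A, P x] = [forall i : 'I_#|A|, P (enum_val i)].
Proof.
apply/forall_inP/forallP => [PA i | Penum x xA]; first by apply/PA/enum_valP.
by rewrite -(enum_rankK_in xA xA).
Qed.

Lemma sc_iso_inverse (V1 V2 : finType) (K1 : {set {set V1}}) (K2 : {set {set V2}})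
    (g : V2 -> V1) :
  bijective g -> (forall t : {set V2}, (g @: t \in K1) = (t \in K2)) -> sc_iso K1 K2.
Proof.
case=> f gK fK g_faces; exists f; split; first by exists g.
by move=> s; rewrite -g_faces -imset_comp (eq_imset _ fK) imset_id.
Qed.

Section PrivateVertices.

Variables (V : finType) (r : nat) (M : 'I_r -> {set V}) (a : 'I_r -> V).
Hypothesis a_in : forall i, a i \in M i.
Hypothesis a_notin : forall i j, j != i -> a i \notin M j.

Lemma private_vertex_inj : injective a.
Proof.
move=> i j aij; apply/eqP/negPn/negP; rewrite eq_sym => /a_notin.
by rewrite aij a_in.
Qed.

Definition residual_vertex := {x : V | x \notin codom a}.

Definition residual_family (i : 'I_r) : {set residual_vertex} :=
  [set w | val w \in M i].

Definition restore_vertex (u : residual_vertex + 'I_r) : V :=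
  match u with inl w => val w | inr i => a i end.

Lemma restore_vertex_inj : injective restore_vertex.
Proof.
case=> [w|i] [w'|i'] //= E.
- by congr inl; apply: val_inj.
- by have := valP w; rewrite /= E codom_f.
- by have := valP w'; rewrite /= -E codom_f.
- by rewrite (private_vertex_inj E).
Qed.

Lemma restore_vertex_bij : bijective restore_vertex.
Proof.
apply: (inj_card_bij restore_vertex_inj).
rewrite card_sum card_sig card_ord -(cardC (mem (codom a))) addnC.
by rewrite (card_codom private_vertex_inj) card_ord.
Qed.

Lemma restore_tilde_N i : restore_vertex @: tilde_N residual_family i = M i.
Proof.
apply/setP => x; apply/imsetP/idP.
  case=> u /setUP [/imsetP [w + ->] | /set1P ->] -> //=.
  by rewrite inE.
move=> xM; have [/codomP [j xj] | x_res] := boolP (x \in codom a).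
  rewrite {}xj in xM *.
  have -> : j = i by apply: contraTeq xM; rewrite eq_sym; apply: a_notin.
  by exists (inr i); rewrite // !inE eqxx orbT.
by exists (inl (exist _ x x_res)); rewrite // !inE imset_f ?inE.
Qed.

Lemma K_of_residual_memE t :
  (t \in K_of residual_family) = [forall i, ~~ (M i \subset restore_vertex @: t)].
Proof.
rewrite inE; apply: eq_forallb => i; congr negb.
rewrite -restore_tilde_N; apply/idP/idP => [/imsetS // | ].
move/subsetP => sub; apply/subsetP => u /(imset_f restore_vertex)/sub.
by rewrite (mem_imset _ _ restore_vertex_inj).
Qed.

End PrivateVertices.

Theorem proposition2p3 (m : nat) (K : {set {set 'I_m}}) :
  simplicial_complex K -> minimal_Taylor_resolution K ->
  exists (W : finType) (r : nat) (N : 'I_r -> {set W}), sc_iso K (K_of N).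
Proof.
move=> SC MT; pose M (i : 'I_#|min_nonfaces K|) := enum_val i.
have /fin_all_exists2 [a a_in a_notin] :
    forall i, exists2 x, x \in M i & forall j, j != i -> x \notin M j.
  move=> i.
  have [x xM x_notin] := minimal_Taylor_private_vertex MT (enum_valP i).
  by exists x => // j ji; rewrite x_notin ?enum_valP // (inj_eq enum_val_inj).
exists (residual_vertex a), _, (residual_family M a).
apply: (sc_iso_inverse (restore_vertex_bij a_in a_notin)) => t.
by rewrite K_of_residual_memE // complex_memE // forall_in_enum_val.
Qed.
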